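(* Let $(\mathcal{M},\delta)$ be a path-connected metric space and let $P\subset\mathcal{M}$ be a finite set with $|P|\ge 2$. Then $GR_P\ge 1$.
   Context: For a metric space $(\mathcal{M},\delta)$ and a finite set $P\subset\mathcal{M}$ with $|P|\ge 2$, define $r_P=\min_{p,q\in P,\,p\neq q}\delta(p,q)/2$, $R_P=\sup_{x\in\mathcal{M}}\min_{p\in P}\delta(x,p)$, and the gap ratio $GR_P=R_P/r_P$. *)

From mathcomp Require Import all_boot all_order all_algebra.
From mathcomp Require Import all_classical all_reals ereal.
Set Implicit Arguments. Unset Strict Implicit. Unset Printing Implicit Defensive.
Import Order.TTheory GRing.Theory Num.Theory.
Local Open Scope classical_set_scope.
Local Open Scope ring_scope.

Section Defs.
Variables (R : realType) (T : Type).

Definition is_metric (d : T -> T -> R) : Prop :=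
  [/\ forall x y, 0 <= d x y,
      forall x y, d x y = 0 <-> x = y,
      forall x y, d x y = d y x &
      forall x y z, d x z <= d x y + d y z].

(* gamma : [0,1] -> T is continuous w.r.t. the usual topology on [0,1]
   and the metric topology of d (only values on [0,1] matter) *)
Definition path_cont (d : T -> T -> R) (gamma : R -> T) : Prop :=
  forall t, 0 <= t <= 1 -> forall e, 0 < e -> exists2 del, 0 < del &
    forall s, 0 <= s <= 1 -> `|s - t| < del -> d (gamma s) (gamma t) < e.

Definition path_connected (d : T -> T -> R) : Prop :=
  forall x y, exists gamma : R -> T,
    [/\ path_cont d gamma, gamma 0 = x & gamma 1 = y].

Definition r_P (d : T -> T -> R) (P : set T) : R :=
  inf [set r | exists p q, [/\ P p, P q, p <> q & r = d p q / 2]].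

Definition dist_to (d : T -> T -> R) (P : set T) (x : T) : R :=
  inf [set d x p | p in P].

Definition R_P (d : T -> T -> R) (P : set T) : \bar R :=
  ereal_sup [set (dist_to d P x)%:E | x in [set: T]].

Definition GR_P (d : T -> T -> R) (P : set T) : \bar R :=
  (R_P d P * ((r_P d P)^-1)%:E)%E.

End Defs.

From mathcomp Require Import all_boot all_order all_algebra finmap.
From mathcomp Require Import all_classical all_reals ereal topology normedtype.
From mathcomp Require Import lra.
Set Implicit Arguments. Unset Strict Implicit. Unset Printing Implicit Defensive.
Import Order.TTheory GRing.Theory Num.Theory.
Import numFieldNormedType.Exports.

Local Open Scope classical_set_scope.
Local Open Scope ring_scope.

(* Since P is finite, r = r_P > 0.  Pick p <> q in P; along a path from p to q
   the distance to p runs continuously from 0 to d(q, p) >= 2r, so some point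
   x has d(x, p) = r.
   Every other p' in P satisfies d(x, p') >= d(p, p') - d(p, x) >= 2r - r = r,
   hence min_{p' in P} d(x, p') >= r, so R_P >= r and GR_P >= 1. *)

Lemma finite_pos_lbound {R : realType} (S : set R) :
  finite_set S -> (forall x, S x -> 0 < x) -> exists2 e, 0 < e & lbound S e.
Proof.
move=> /finite_fsetP[X ->] Xpos.
exists (\big[Order.min/1]_(x : X) val x).
  by apply: lt_bigmin => // x _; apply: Xpos; exact: fsvalP.
by move=> x xX; exact: (bigmin_le 1 [` xX]%fset val).
Qed.

Section GapRatio.
Variables (R : realType) (T : Type) (d : T -> T -> R).
Hypothesis d_metric : is_metric d.

Lemma path_cont_dist (g : R -> T) (p : T) : path_cont d g ->
  {within `[0, 1], continuous (fun t => d (g t) p)}.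
Proof.
case: d_metric => _ _ dC dtri gc.
rewrite continuous_subspace_in => t; rewrite inE /= in_itv /= => t01.
apply/cvgrPdist_lt => e e0; have [del del0 gdel] := gc t t01 e e0.
rewrite -nbhs_subspace_in; last by rewrite /= in_itv.
apply/nbhs_ballP; exists del => //= s; rewrite /ball_ /= => ts.
rewrite in_itv /= => s01.
have := gdel s s01; rewrite distrC => /(_ ts) gst.
have := dtri (g s) (g t) p; have := dtri (g t) (g s) p; rewrite (dC (g t) (g s)).
by rewrite /from_subspace ltr_distl; move=> *; apply/andP; split; lra.
Qed.

Lemma path_connected_dist_ivt (p q : T) (s : R) : path_connected d ->
  0 <= s <= d q p -> exists x, d x p = s.
Proof.
move=> pc s_range; have [g [gc g0 g1]] := pc p q.
have [d0 dE _ _] := d_metric.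
have [c _ gcs] : exists2 c, c \in `[0, 1] & d (g c) p = s.
  apply: IVT ler01 (path_cont_dist gc) _.
  by rewrite g0 g1 (proj2 (dE p p) erefl) (min_l (d0 q p)) (max_r (d0 q p)).
by exists (g c).
Qed.

Lemma r_P_le (P : set T) (a b : T) : P a -> P b -> a <> b ->
  r_P d P <= d a b / 2.
Proof.
have [d0 _ _ _] := d_metric => Pa Pb ab; apply: ge_inf; last by exists a, b.
by exists 0 => _ [x [y [_ _ _ ->]]]; rewrite divr_ge0.
Qed.

Lemma r_P_gt0 (P : set T) : finite_set P -> (exists p q, P p /\ P q /\ p <> q) ->
  0 < r_P d P.
Proof.
have [d0 dE _ _] := d_metric => fP [p [q [Pp [Pq pq]]]].
set S := [set r | exists p q, [/\ P p, P q, p <> q & r = d p q / 2]].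
have fS : finite_set S.
  apply: sub_finite_set (finite_image2 (fun a b => d a b / 2) fP fP).
  by move=> _ [a [b [Pa Pb _ ->]]]; exists a => //; exists b.
have [_ [a [b [_ _ ab ->]]]|e e0 Se] := finite_pos_lbound fS.
  by rewrite divr_gt0 // lt_neqAle d0 andbT eq_sym; apply/eqP => /dE.
by apply: (lt_le_trans e0); apply: lb_le_inf => //; exists (d p q / 2), p, q.
Qed.

Lemma r_P_le_dist_to (P : set T) (p x : T) : P p -> d x p = r_P d P ->
  r_P d P <= dist_to d P x.
Proof.
have [_ _ dC dtri] := d_metric => Pp dxp.
apply: lb_le_inf; first by exists (d x p), p.
move=> _ [p' Pp' <-]; have [->|pp'] := pselect (p' = p); first by rewrite dxp.
have := r_P_le Pp Pp' (nesym pp'); have := dtri p x p'; rewrite (dC p x) dxp; lra.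
Qed.

Lemma r_P_le_R_P (P : set T) : path_connected d -> finite_set P ->
  (exists p q, P p /\ P q /\ p <> q) -> ((r_P d P)%:E <= R_P d P)%E.
Proof.
move=> pc fP [p [q [Pp [Pq pq]]]].
have [d0 _ dC _] := d_metric.
have r_range : 0 <= r_P d P <= d q p.
  rewrite ltW ?r_P_gt0 //=; last by exists p, q.
  by have := r_P_le Pp Pq pq; rewrite dC; have := d0 q p; lra.
have [x dxp] := path_connected_dist_ivt pc r_range.
apply: (@le_trans _ _ (dist_to d P x)%:E).
  by rewrite lee_fin; exact: r_P_le_dist_to dxp.
by apply: ereal_sup_ubound; exists x.
Qed.

End GapRatio.

Theorem lemma1 (R : realType) (T : Type) (d : T -> T -> R) (P : set T) :
  is_metric d -> path_connected d ->
  finite_set P -> (exists p q, P p /\ P q /\ p <> q) ->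
  (1 <= GR_P d P)%E.
Proof.
move=> dm pc fP PP; have r0 := r_P_gt0 dm fP PP.
apply: (@le_trans _ _ ((r_P d P)%:E * (r_P d P)^-1%:E)%E).
  by rewrite -EFinM divff ?gt_eqF.
by apply: lee_wpmul2r; [rewrite lee_fin invr_ge0 ltW | exact: r_P_le_R_P].
Qed.
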